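(* Let $I\ge 0$, $S\ge 1$ and $j$ be integers with $L(I,S)\le j\le\lfloor I/2\rfloor$, consider the pairing process described in the context, and fix a clean device $w_t$. Let $B$ be a set of $j$ bb-pairings that is the set of bb-pairings of some possible wiring. The number of possible wirings whose set of bb-pairings is exactly $B$ and in which $w_t$ is paired equals $S!$ if $(I,S,j)$ is in the dagger case, and equals $(I-2j)!\binom{S-1}{I-2j-1}$ otherwise, with the convention $\binom{A}{B}=0$ when $B<0$.
   Context: Pairing process: there are $I$ infected devices $b_1,\dots,b_I$ and $S$ clean devices $w_1,\dots,w_S$. For $t=1,\dots,I$ in this order: if $b_t$ is not yet paired and at least one device other than $b_t$ is not yet paired, then $b_t$ chooses one of the currently unpaired devices other than itself uniformly at random, independently of previous choices, and becomes paired with it; otherwise $b_t$ does nothing. Each device belongs to at most one pair. The wiring is the final set of pairs; a bb-pairing is a pair consisting of two infected devices; a wiring is possible if it occurs with positive probability. $L(I,S)=0$ if $I\le S$; $L(I,S)=\frac{I-S}{2}$ if $I>S$ and $I-S$ is even; $L(I,S)=\frac{I-S-1}{2}$ if $I>S$ and $I-S$ is odd. $(I,S,j)$ is in the dagger case if $I>S$, $I+S$ is odd and $j=\frac{I-S-1}{2}$. *)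

From mathcomp Require Import all_boot.
Set Implicit Arguments. Unset Strict Implicit. Unset Printing Implicit Defensive.

(* Devices: inl i = infected device b_(i+1), inr k = clean device w_(k+1). *)
Definition device (I S : nat) : finType := ('I_I + 'I_S)%type.

Definition wiring (I S : nat) := {set {set device I S}}.

Section Process.
Variables I S : nat.
Implicit Types (W : wiring I S) (x y : device I S).

Definition is_paired W x : bool := [exists p in W, x \in p].

Definition infected x : bool := if x is inl _ then true else false.

Definition turn (t : 'I_I) W : {set wiring I S} :=
  let b := (inl t : device I S) in
  if ~~ is_paired W b && [exists y, (y != b) && ~~ is_paired W y] then
    [set [set b; y] |: W | y in [pred y | (y != b) && ~~ is_paired W y]]
  else [set W].

Definition turn_all (t : 'I_I) (R : {set wiring I S}) : {set wiring I S} :=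
  \bigcup_(W in R) turn t W.

(* States reachable with positive probability after the turns of b_1..b_I,
   processed in the order t = 1, ..., I (enum 'I_I is increasing). *)
Definition possible_wirings : {set wiring I S} :=
  foldl (fun R t => turn_all t R) [set set0] (enum 'I_I).

Definition possible W : bool := W \in possible_wirings.

Definition bb_pairings W : {set {set device I S}} :=
  [set p in W | [forall x in p, infected x]].

End Process.

Definition Lbound (I S : nat) : nat :=
  if I <= S then 0
  else if ~~ odd (I - S) then (I - S)./2 else (I - S - 1)./2.

Definition dagger (I S j : nat) : bool :=
  [&& S < I, odd (I + S) & j == (I - S - 1)./2].

(* A wiring is possible iff its pairs are disjoint 2-sets, each containing an
   infected device, and whenever an infected b_u is left unpaired, all other
   devices are paired and every pair contains an infected device of index < u:
   b_u found nobody free at its turn.  Conversely such a wiring is reached by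
   replaying it: at its turn, b_t picks its partner in the wiring unless it has
   already been picked.  Once the bb-pairings B are fixed, every other pair joins one of the
   m = I - 2j infected devices not covered by B to a clean device.  If m <= S
   all of them are paired, so the wirings in question correspond to the
   injections into the S clean devices hitting w_t, and there are
   S^(m) - (S-1)^(m) = m! C(S-1, m-1) of them.  In the dagger case m = S + 1:
   exactly one of them, necessarily the last one, stays unpaired and the others
   are matched bijectively with the clean devices, giving S! wirings. *)

From mathcomp Require Import all_boot zify.
Set Implicit Arguments. Unset Strict Implicit. Unset Printing Implicit Defensive.

Lemma card2_split (T : finType) (p : {set T}) a :
  #|p| = 2 -> a \in p -> exists2 b, b != a & p = [set a; b].
Proof.
move=> /eqP/cards2P[x [y [xy Ep]]]; rewrite Ep !inE => /orP[]/eqP->.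
  by exists y; rewrite 1?eq_sym.
by exists x; rewrite // setUC.
Qed.

Lemma card2_eq (T : finType) (p : {set T}) a b :
  #|p| = 2 -> a \in p -> b \in p -> a != b -> p = [set a; b].
Proof.
move=> cp ap bp ab; apply/eqP; rewrite eq_sym eqEcard cards2 ab cp leqnn andbT.
by rewrite subUset !sub1set ap bp.
Qed.

Lemma card_inj_ffuns_hitting (aT rT : finType) (y : rT) :
  #|[set g : {ffun aT -> rT} | injectiveb g && (y \in codom g)]| =
  #|rT| ^_ #|aT| - #|rT|.-1 ^_ #|aT|.
Proof.
rewrite -card_inj_ffuns -(cardC1 y) -card_inj_ffuns_on.
set Inj := [set g : {ffun aT -> rT} | injectiveb g].
rewrite -(cardsID [set g : {ffun aT -> rT} | y \in codom g] Inj).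
have -> : Inj :\: [set g : {ffun aT -> rT} | y \in codom g] =
          [set g in ffun_on (predC1 y) | injectiveb g].
  apply/setP => g; rewrite !inE; congr (_ && _).
  apply/negP/ffun_onP => [y_nc x | all_ne /codomP[x Ey]].
    by rewrite !inE; apply/eqP => Ey; apply: y_nc; rewrite -Ey codom_f.
  by move: (all_ne x); rewrite !inE Ey eqxx.
by rewrite addnK; apply: eq_card => g; rewrite !inE.
Qed.

Lemma ffact_sub_pred n m : 0 < n ->
  n ^_ m - n.-1 ^_ m = if m == 0 then 0 else m`! * 'C(n.-1, m.-1).
Proof.
case: n => // n _; case: m => [|m] /=; first by rewrite ?ffactn0.
rewrite ffactSS ffactnSr -[n.+1 * _]mulnC -mulnBr -bin_ffact factS.
case: (leqP m n) => [le_mn|lt_nm]; last by rewrite bin_small // !mul0n muln0.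
have -> : n.+1 - (n - m) = m.+1 by lia.
nia.
Qed.

Lemma Lbound_dagger I S j : Lbound I S <= j -> j <= I./2 ->
  if dagger I S j then I - j.*2 = S.+1 else I - j.*2 <= S.
Proof.
rewrite /Lbound /dagger -!divn2; case: leqP => [le_IS|lt_SI] /=; first lia.
rewrite oddD -oddB ?(ltnW lt_SI) //.
by have := modn2 (I - S); case: odd => /= parity; [case: eqP|]; lia.
Qed.

Section Wirings.
Variables I S : nat.
Implicit Types (W : wiring I S) (x y : device I S) (p q : {set device I S}).

Lemma pairedP W x : reflect (exists2 p, p \in W & x \in p) (is_paired W x).
Proof.
by apply: (iffP existsP) => [[p /andP[]]|[p pW xp]]; [exists p | exists p; rewrite pW].
Qed.

Lemma turn_paired (t : 'I_I) W : is_paired W (inl t) -> turn t W = [set W].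
Proof. by rewrite /turn => ->. Qed.

Lemma turn_no_free (t : 'I_I) W :
  (forall y, y != inl t -> is_paired W y) -> turn t W = [set W].
Proof.
move=> all_paired; rewrite /turn; case: ifP => // /andP[_ /existsP[y /andP[yt]]].
by rewrite all_paired.
Qed.

Lemma turn_pair (t : 'I_I) W y :
  ~~ is_paired W (inl t) -> y != inl t -> ~~ is_paired W y ->
  [set inl t; y] |: W \in turn t W.
Proof.
move=> nt yt ny; rewrite /turn nt.
have -> : [exists y, (y != inl t) && ~~ is_paired W y].
  by apply/existsP; exists y; rewrite yt.
by apply/imsetP; exists y; rewrite // inE yt.
Qed.

Definition reachable k : {set wiring I S} :=
  foldl (fun R t => turn_all t R) [set set0] (take k (enum 'I_I)).

Lemma reachableS k (lt_kI : k < I) :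
  reachable k.+1 = turn_all (Ordinal lt_kI) (reachable k).
Proof.
rewrite /reachable (take_nth (Ordinal lt_kI)) ?size_enum_ord // foldl_rcons.
by congr turn_all; apply: val_inj; rewrite /= nth_enum_ord.
Qed.

Lemma reachable_all : reachable I = possible_wirings I S.
Proof. by rewrite /reachable take_oversize ?size_enum_ord. Qed.

Definition valid_after k W : Prop :=
  [/\ forall p, p \in W -> #|p| = 2,
      forall p, p \in W -> exists2 i : 'I_I, i < k & inl i \in p,
      forall p q x, p \in W -> q \in W -> x \in p -> x \in q -> p = q
    & forall u : 'I_I, u < k -> ~~ is_paired W (inl u) ->
        (forall y, y != inl u -> is_paired W y) /\
        (forall p, p \in W -> exists2 s : 'I_I, s < u & inl s \in p)].

Lemma valid_after_stay (t : 'I_I) W :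
  valid_after t W ->
  is_paired W (inl t) \/ (forall y, y != inl t -> is_paired W y) ->
  valid_after t.+1 W.
Proof.
case=> card_p early disj last tP; split=> // [p /early[i lt_it ip]|u].
  by exists i; rewrite // ltnW.
rewrite ltnS leq_eqVlt => /orP[/eqP/val_inj-> nt|]; last exact: last.
by case: tP => [tp|all_paired]; [rewrite tp in nt | split=> // p /early].
Qed.

Lemma valid_after_pair (t : 'I_I) W y :
  valid_after t W -> ~~ is_paired W (inl t) -> y != inl t -> ~~ is_paired W y ->
  valid_after t.+1 ([set inl t; y] |: W).
Proof.
case=> card_p early disj last nt yt ny.
have fresh q x : q \in W -> x \in q -> x \in [set inl t; y] -> False.
  move=> qW xq; rewrite !inE => /orP[]/eqP Ex; subst x.
    by move/pairedP: nt; apply; exists q.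
  by move/pairedP: ny; apply; exists q.
split.
- by move=> p /setU1P[->|/card_p//]; rewrite cards2 eq_sym yt.
- move=> p /setU1P[->|/early[i lt_it ip]]; first by exists t; rewrite ?setU11.
  by exists i; rewrite // ltnW.
- move=> p q x /setU1P[->|pW] /setU1P[->|qW] xp xq //.
  + by case: (fresh _ _ qW xq xp).
  + by case: (fresh _ _ pW xp xq).
  + exact: disj xp xq.
move=> u; rewrite ltnS leq_eqVlt => /orP[/eqP/val_inj->|lt_ut] nu.
  by case/pairedP: nu; exists [set inl t; y]; rewrite ?setU11.
have nu' : ~~ is_paired W (inl u).
  by apply: contra nu => /pairedP[p pW up]; apply/pairedP; exists p; rewrite ?setU1r.
have [all_paired _] := last u lt_ut nu'.
have tu : inl t != inl u :> device I S.
  by apply: contraTneq lt_ut => -[->]; rewrite ltnn.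
by move: (all_paired _ tu); rewrite (negbTE nt).
Qed.

Lemma valid_after_turn (t : 'I_I) W W' :
  valid_after t W -> W' \in turn t W -> valid_after t.+1 W'.
Proof.
move=> vW; rewrite /turn; case: ifP => [/andP[nt _] /imsetP[y]|stuck /set1P->].
  by rewrite inE => /andP[yt ny] ->; apply: valid_after_pair.
apply: valid_after_stay => //; move/negbT: stuck; rewrite negb_and negbK.
case/orP=> [|/existsPn free]; [by left | right => y yt].
by move: (free y); rewrite yt negbK.
Qed.

Lemma reachable_valid k W : k <= I -> W \in reachable k -> valid_after k W.
Proof.
elim: k W => [|k IH] W.
  by rewrite /reachable take0 => _ /set1P->; split=> // p; rewrite inE.
move=> lt_kI; rewrite (reachableS lt_kI) => /bigcupP[W1 W1R].
exact/valid_after_turn/IH/W1R/ltnW.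
Qed.

Definition pairs_before W k : wiring I S :=
  [set p in W | [exists s : 'I_I, (s < k) && (inl s \in p)]].

Lemma pairs_before0 W : pairs_before W 0 = set0.
Proof. by apply/setP => p; rewrite !inE; case: existsP; rewrite ?andbF // => -[]. Qed.

Lemma pairs_beforeS W (t : 'I_I) :
  pairs_before W t.+1 = pairs_before W t :|: [set p in W | inl t \in p].
Proof.
apply/setP => p; rewrite !inE -andb_orr; congr (_ && _); apply/existsP/orP.
  case=> s /andP[]; rewrite ltnS leq_eqVlt => /orP[/eqP/val_inj-> ->|lt_st sp].
    by right.
  by left; apply/existsP; exists s; rewrite lt_st.
case=> [/existsP[s /andP[lt_st sp]]|tp]; first by exists s; rewrite sp ltnW.
by exists t; rewrite tp ltnSn.
Qed.

Lemma pairs_before_id W k :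
  (forall p, p \in W -> exists2 s : 'I_I, s < k & inl s \in p) ->
  pairs_before W k = W.
Proof.
move=> early; apply/setP => p; rewrite inE andb_idr // => /early[s lt_sk sp].
by apply/existsP; exists s; rewrite lt_sk.
Qed.

Lemma pairs_before_turn W (t : 'I_I) :
  valid_after I W -> pairs_before W t.+1 \in turn t (pairs_before W t).
Proof.
case=> card_p early disj last; rewrite pairs_beforeS.
have sub_W : pairs_before W t \subset W by apply/subsetP => p; rewrite inE => /andP[].
case: (boolP (is_paired W (inl t))) => [/pairedP[p pW tp]|nt]; last first.
  have [all_paired earlier] := last t (ltn_ord t) nt.
  have -> : [set p in W | inl t \in p] = set0.
    by apply/setP => p; rewrite !inE; apply/andP => -[pW tp]; case/pairedP: nt; exists p.
  rewrite setU0 pairs_before_id // turn_no_free ?set11 //.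
have -> : [set q in W | inl t \in q] = [set p].
  apply/setP => q; rewrite !inE; apply/andP/eqP => [[qW tq]|->//].
  exact: disj tq tp.
case: (boolP (p \in pairs_before W t)) => pt.
  rewrite (setUidPl _) ?sub1set // turn_paired ?set11 //.
  by apply/pairedP; exists p.
have [y yt Ep] := card2_split (card_p p pW) tp.
have free x : x \in p -> ~~ is_paired (pairs_before W t) x.
  move=> xp; apply/pairedP => -[q qt xq].
  by move: pt; rewrite -(disj _ _ _ (subsetP sub_W q qt) pW xq xp) qt.
by rewrite setUC Ep; apply: turn_pair => //; apply: free; rewrite Ep !inE eqxx ?orbT.
Qed.

Lemma pairs_before_reachable W k :
  valid_after I W -> k <= I -> pairs_before W k \in reachable k.
Proof.
move=> vW; elim: k => [|k IH] lt_kI; first by rewrite pairs_before0 /reachable take0 set11.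
rewrite (reachableS lt_kI); apply/bigcupP; exists (pairs_before W k).
  exact/IH/ltnW.
exact: (pairs_before_turn (Ordinal lt_kI) vW).
Qed.

Lemma possibleP W : possible W <-> valid_after I W.
Proof.
rewrite /possible -reachable_all; split; first exact: reachable_valid.
move=> vW; have [_ early _ _] := vW.
by rewrite -(pairs_before_id early); apply: pairs_before_reachable.
Qed.

Definition uncovered (B : {set {set device I S}}) : {set 'I_I} :=
  [set i | inl i \notin cover B].

Lemma bb_pairings_in W p : p \in bb_pairings W -> p \in W.
Proof. by rewrite inE => /andP[]. Qed.

Lemma bb_pairings_infected W p x : p \in bb_pairings W -> x \in p -> infected x.
Proof. by rewrite inE => /andP[_ /forallP all_inf] xp; move: (all_inf x); rewrite xp. Qed.

Lemma cover_paired W x : x \in cover (bb_pairings W) -> is_paired W x.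
Proof. by move/bigcupP => [q /bb_pairings_in qW xq]; apply/pairedP; exists q. Qed.

Definition matching (B : wiring I S) (M : {set 'I_I})
    (g : {ffun 'I_#|M| -> 'I_S}) : wiring I S :=
  B :|: [set [set inl (enum_val k); inr (g k)] | k : 'I_#|M|].

Lemma matching_paired_cover B (M : {set 'I_I}) (g : {ffun 'I_#|M| -> 'I_S}) x :
  x \in cover B -> is_paired (matching B g) x.
Proof. by case/bigcupP => q qB xq; apply/pairedP; exists q; rewrite // in_setU qB. Qed.

Lemma matching_paired_in B (M : {set 'I_I}) (g : {ffun 'I_#|M| -> 'I_S}) i :
  i \in M -> is_paired (matching B g) (inl i).
Proof.
move=> iM; apply/pairedP; exists [set inl i; inr (g (enum_rank_in iM i))]; last first.
  by rewrite set21.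
rewrite in_setU; apply/orP; right; apply/imsetP.
by exists (enum_rank_in iM i); rewrite ?enum_rankK_in.
Qed.

Lemma matching_paired_image B (M : {set 'I_I}) (g : {ffun 'I_#|M| -> 'I_S}) k :
  is_paired (matching B g) (inr (g k)).
Proof.
apply/pairedP; exists [set inl (enum_val k); inr (g k)]; last by rewrite set22.
by rewrite in_setU; apply/orP; right; apply/imsetP; exists k.
Qed.

Lemma bb_matching W0 (M : {set 'I_I}) (g : {ffun 'I_#|M| -> 'I_S}) :
  bb_pairings (matching (bb_pairings W0) g) = bb_pairings W0.
Proof.
apply/setP => p; rewrite [in LHS]inE in_setU.
case: (boolP (p \in bb_pairings W0)) => [|_] /=; first by rewrite inE => /andP[].
case: imsetP => //= -[k _ ->]; apply/negbTE/forallPn.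
by exists (inr (g k)); rewrite set22.
Qed.

Lemma matching_inj W0 (M : {set 'I_I}) : injective (@matching (bb_pairings W0) M).
Proof.
move=> g1 g2 E; apply/ffunP => k.
have : [set inl (enum_val k); inr (g1 k)] \in matching (bb_pairings W0) g2.
  by rewrite -E in_setU; apply/orP; right; apply/imsetP; exists k.
rewrite in_setU => /orP[/bb_pairings_infected/(_ (set22 _ _))//|].
case/imsetP => k' _ E'.
have : inl (enum_val k) \in [set inl (enum_val k'); inr (g2 k')] by rewrite -E' set21.
rewrite !inE => /orP[]/eqP // -[/enum_val_inj Ek]; subst k'.
have : inr (g1 k) \in [set inl (enum_val k); inr (g2 k)] by rewrite -E' set22.
by rewrite !inE => /orP[]/eqP // -[].
Qed.

Lemma matching_valid W0 (M : {set 'I_I}) (g : {ffun 'I_#|M| -> 'I_S}) :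
  let W := matching (bb_pairings W0) g in
  valid_after I W0 -> M \subset uncovered (bb_pairings W0) -> injective g ->
  (forall u : 'I_I, ~~ is_paired W (inl u) ->
     (forall y, y != inl u -> is_paired W y) /\
     (forall p, p \in W -> exists2 s : 'I_I, s < u & inl s \in p)) ->
  valid_after I W.
Proof.
move=> W [card_p early disj _] /subsetP sub_M g_inj last.
have apart q x k : q \in bb_pairings W0 -> x \in q ->
    x \in [set inl (enum_val k); inr (g k)] -> False.
  move=> qB xq; rewrite !inE => /orP[]/eqP Ex; subst x.
    have := sub_M _ (enum_valP k); rewrite inE => /negP; apply.
    by apply/bigcupP; exists q.
  by move: (bb_pairings_infected qB xq).
split=> [p|p|p q x|u _]; last exact: last.
- by case/setUP=> [/bb_pairings_in/card_p //|/imsetP[k _ ->]]; rewrite cards2.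
- case/setUP=> [/bb_pairings_in/early //|/imsetP[k _ ->]].
  by exists (enum_val k); rewrite ?set21.
move=> /setUP[pB|/imsetP[k _ ->]] /setUP[qB|/imsetP[k' _ ->]] xp xq.
- exact: disj (bb_pairings_in pB) (bb_pairings_in qB) xp xq.
- by case: (apart _ _ _ pB xp xq).
- by case: (apart _ _ _ qB xq xp).
move: xp xq; rewrite !inE => /orP[]/eqP -> /orP[]/eqP // -[].
  by move/enum_val_inj ->.
by move/g_inj ->.
Qed.

Section ValidWiring.
Variable W : wiring I S.
Hypothesis vW : valid_after I W.
Local Notation B := (bb_pairings W).
Local Notation N := (uncovered (bb_pairings W)).

Lemma pair_eq p q x : p \in W -> q \in W -> x \in p -> x \in q -> p = q.
Proof. by case: vW => _ _ disj _; apply: disj. Qed.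

Lemma mixed_pair p :
  p \in W -> p \notin B -> exists i w, p = [set inl i; inr w] /\ i \in N.
Proof.
have [card_p early _ _] := vW; move=> pW npB.
have [x xp] : exists2 x, x \in p & ~~ infected x.
  move: npB; rewrite inE pW /= => /forallPn[x]; rewrite negb_imply => /andP[xp nx].
  by exists x.
case: x xp => // w wp _; have [i _ ip] := early p pW.
exists i, w; split; first by apply: card2_eq; rewrite ?card_p.
rewrite inE; apply: contra npB => /bigcupP[q qB iq].
by rewrite (pair_eq pW (bb_pairings_in qB) ip iq).
Qed.

Lemma clean_partner_uniq i w w' :
  [set inl i; inr w] \in W -> [set inl i; inr w'] \in W -> w = w'.
Proof.
move=> p1 p2; have E := pair_eq p1 p2 (setU11 _ _) (setU11 _ _).
have : (inr w : device I S) \in [set inl i; inr w'] by rewrite -E set22.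
by rewrite !inE => /orP[]/eqP // -[].
Qed.

Lemma infected_partner_uniq i i' w :
  [set inl i; inr w] \in W -> [set inl i'; inr w] \in W -> i = i'.
Proof.
move=> p1 p2; have E := pair_eq p1 p2 (set22 _ _) (set22 _ _).
have : (inl i : device I S) \in [set inl i'; inr w] by rewrite -E set21.
by rewrite !inE => /orP[]/eqP // -[].
Qed.

Lemma exists_clean_partner i :
  i \in N -> is_paired W (inl i) -> exists w, [set inl i; inr w] \in W.
Proof.
rewrite inE => nc /pairedP[p pW ip].
have npB : p \notin B by apply: contra nc => pB; apply/bigcupP; exists p.
have [i' [w [Ep _]]] := mixed_pair pW npB.
by move: ip; rewrite Ep !inE => /orP[]/eqP // -[->]; exists w; rewrite -Ep.
Qed.

Lemma exists_infected_partner w :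
  is_paired W (inr w) -> exists2 i, [set inl i; inr w] \in W & i \in N.
Proof.
move=> /pairedP[p pW wp].
have npB : p \notin B by apply: contraL wp => pB; apply/negP => /(bb_pairings_infected pB).
have [i [w' [Ep iN]]] := mixed_pair pW npB.
by move: wp; rewrite Ep !inE => /orP[]/eqP // -[->]; exists i; rewrite -?Ep.
Qed.

Lemma card_uncovered : #|N| = I - #|B|.*2.
Proof.
have [card_p _ _ _] := vW.
have card_cover : #|cover B| = #|B|.*2.
  have /eqP <- : trivIset B.
    apply/trivIsetP => p q pB qB; apply: contraNT => /pred0Pn[x /andP[xp xq]].
    by apply/eqP/(pair_eq (bb_pairings_in pB) (bb_pairings_in qB) xp xq).
  rewrite (eq_bigr (fun _ => 2)) => [|p /bb_pairings_in/card_p//].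
  by rewrite sum_nat_const muln2.
rewrite -card_cover; have <- : #|(@inl _ 'I_S) @: ~: N| = #|cover B|.
  apply: eq_card => x; apply/imsetP/idP => [[i]|xc].
    by rewrite !inE negbK => ? ->.
  case: x xc => [i|w] xc; first by exists i; rewrite ?inE ?negbK.
  by case/bigcupP: xc => q qB wq; move: (bb_pairings_infected qB wq).
by rewrite card_imset => [|a b []]; rewrite // [LHS]cardsCs card_ord.
Qed.

Lemma unpaired_infected_max u :
  ~~ is_paired W (inl u) -> forall i, i \in N -> i != u -> i < u.
Proof.
have [_ _ _ last] := vW; move=> nu i iN iu.
have [all_paired earlier] := last u (ltn_ord u) nu.
have : inl i != inl u :> device I S by apply: contra iu => /eqP[->].
move/all_paired/(exists_clean_partner iN) => [w iw].
have [s lt_su] := earlier _ iw.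
by rewrite !inE => /orP[]/eqP // -[<-].
Qed.

Lemma uncovered_gt_of_unpaired u : ~~ is_paired W (inl u) -> S < #|N|.
Proof.
have [_ _ _ last] := vW; move=> nu.
have uN : u \in N by rewrite inE; apply: contra nu; apply: cover_paired.
have [all_paired _] := last u (ltn_ord u) nu.
pose partner (w : 'I_S) := odflt u [pick i | [set inl i; inr w] \in W].
have partnerP w : [set inl (partner w); inr w] \in W /\ partner w \in N.
  have [i iw iN] := exists_infected_partner (all_paired (inr w) isT).
  rewrite /partner; case: pickP => [i' i'w|none]; last by move: (none i); rewrite iw.
  by rewrite /= -(infected_partner_uniq iw i'w).
have partner_inj : injective partner.
  move=> w w' E; have [pw _] := partnerP w; have [pw' _] := partnerP w'.
  by rewrite E in pw; apply: clean_partner_uniq pw pw'.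
have : partner @: [set: 'I_S] \subset N :\ u.
  apply/subsetP => _ /imsetP[w _ ->]; have [pw pN] := partnerP w.
  rewrite in_setD1 pN andbT; apply: contra nu => /eqP <-.
  by apply/pairedP; exists [set inl (partner w); inr w]; rewrite ?setU11.
move/subset_leq_card; rewrite card_imset // cardsT card_ord.
by rewrite (cardsD1 u N) uN add1n ltnS.
Qed.

(* [d] is a junk default, never returned for a paired uncovered [i]. *)
Definition clean_partner (d : 'I_S) (i : 'I_I) : 'I_S :=
  odflt d [pick w | [set inl i; inr w] \in W].

Lemma clean_partnerP d i :
  i \in N -> is_paired W (inl i) -> [set inl i; inr (clean_partner d i)] \in W.
Proof.
move=> iN ip; have [w iw] := exists_clean_partner iN ip.
by rewrite /clean_partner; case: pickP => [//|none]; move: (none w); rewrite iw.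
Qed.

Lemma uncovered_le (d : 'I_S) :
  {in N, forall i, is_paired W (inl i)} -> #|N| <= S.
Proof.
move=> N_paired; have partner_inj : {in N &, injective (clean_partner d)}.
  move=> i i' iN i'N E; have iw := clean_partnerP d iN (N_paired i iN).
  by rewrite E in iw; apply: infected_partner_uniq iw (clean_partnerP d i'N (N_paired i' i'N)).
rewrite -(card_in_imset partner_inj).
by apply: leq_trans (max_card _) _; rewrite card_ord.
Qed.

Lemma exists_unpaired_uncovered (d : 'I_S) :
  S < #|N| -> exists2 u, u \in N & ~~ is_paired W (inl u).
Proof.
case: (boolP [exists u in N, ~~ is_paired W (inl u)]) => [/exists_inP//|].
move=> /exists_inPn N_paired; rewrite ltnNge (uncovered_le d) // => i.
by move/N_paired/negPn.
Qed.

Lemma matchingE (M : {set 'I_I}) (d : 'I_S) :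
  M = [set i in N | is_paired W (inl i)] ->
  let g := [ffun k : 'I_#|M| => clean_partner d (enum_val k)] in
  [/\ W = matching B g, injective g & forall w, is_paired W (inr w) -> w \in codom g].
Proof.
move=> EM g.
have gP k : [set inl (enum_val k); inr (g k)] \in W.
  by have := enum_valP k; rewrite {2}EM inE ffunE => /andP[]; apply: clean_partnerP.
have g_rank i w : [set inl i; inr w] \in W -> i \in N -> exists k, i = enum_val k /\ g k = w.
  move=> iw iN; have iM : i \in M.
    by rewrite EM inE iN; apply/pairedP; exists [set inl i; inr w]; rewrite ?set21.
  exists (enum_rank_in iM i); rewrite enum_rankK_in //; split=> //.
  by apply: (clean_partner_uniq _ iw); have := gP (enum_rank_in iM i); rewrite enum_rankK_in.
split.
- apply/setP => p; rewrite in_setU; apply/idP/idP => [pW|]; last first.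
    by case/orP => [/bb_pairings_in //|/imsetP[k _ ->]].
  case: (boolP (p \in B)) => //= npB.
  have [i [w [Ep iN]]] := mixed_pair pW npB.
  have iw : [set inl i; inr w] \in W by rewrite -Ep.
  by have [k [Ei Ew]] := g_rank i w iw iN; apply/imsetP; exists k; rewrite // Ep Ei Ew.
- move=> k k' Ekk'; have pk := gP k; rewrite Ekk' in pk.
  exact/enum_val_inj/(infected_partner_uniq pk (gP k')).
move=> w /exists_infected_partner[i iw iN]; have [k [_ <-]] := g_rank i w iw iN.
exact: codom_f.
Qed.

End ValidWiring.

Definition wirings_bb_paired (B : {set {set device I S}}) (t : 'I_S) : {set wiring I S} :=
  [set W | [&& possible W, bb_pairings W == B & is_paired W (inr t)]].

Section Counting.
Variables (W0 : wiring I S) (t : 'I_S).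
Hypothesis vW0 : valid_after I W0.
Local Notation B0 := (bb_pairings W0).
Local Notation N0 := (uncovered (bb_pairings W0)).
Local Notation target := (wirings_bb_paired B0 t).

Lemma card_target_matching (M : {set 'I_I}) (G : {set {ffun 'I_#|M| -> 'I_S}}) :
  (forall g, g \in G -> matching B0 g \in target) ->
  (forall W, W \in target -> exists2 g, g \in G & W = matching B0 g) ->
  #|target| = #|G|.
Proof.
move=> inT inG; rewrite -(card_imset _ (@matching_inj W0 M)).
by apply: eq_card => W; apply/idP/imsetP => [/inG|[g /inT gT ->]].
Qed.

Lemma targetP W :
  W \in target -> [/\ valid_after I W, bb_pairings W = B0 & is_paired W (inr t)].
Proof. by rewrite inE => /and3P[/possibleP vW /eqP bbW tW]. Qed.

Lemma matching_in_target (M : {set 'I_I}) (g : {ffun 'I_#|M| -> 'I_S}) :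
  valid_after I (matching B0 g) -> is_paired (matching B0 g) (inr t) ->
  matching B0 g \in target.
Proof. by move=> vW tW; rewrite inE bb_matching eqxx tW !andbT; apply/possibleP. Qed.

Lemma card_target_all_matched : #|N0| <= S ->
  #|target| = #|[set g : {ffun 'I_#|N0| -> 'I_S} | injectiveb g && (t \in codom g)]|.
Proof.
move=> le_N0S; apply: card_target_matching => [g|W].
  rewrite inE => /andP[/injectiveP g_inj /codomP[k Ek]].
  apply: matching_in_target; last by rewrite Ek matching_paired_image.
  apply: matching_valid => // u.
  case: (boolP (inl u \in cover B0)) => [/matching_paired_cover -> //|nc].
  by rewrite matching_paired_in // inE.
case/targetP => vW bbW tW.
have all_paired : N0 = [set i in uncovered (bb_pairings W) | is_paired W (inl i)].
  apply/setP => i; rewrite inE bbW andb_idr // => _.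
  apply: contraLR le_N0S => ni; rewrite -ltnNge -bbW.
  by have := uncovered_gt_of_unpaired vW ni.
have [EW g_inj tg] := matchingE vW t all_paired.
exists [ffun k => clean_partner W t (enum_val k)]; last by rewrite {1}EW bbW.
by rewrite inE; apply/andP; split; [apply/injectiveP | apply: tg].
Qed.

Section OneUnmatched.
Variable u0 : 'I_I.
Hypotheses (u0N : u0 \in N0) (nu0 : ~~ is_paired W0 (inl u0)).
Hypothesis card_N0 : #|N0| = S.+1.
Local Notation M := (N0 :\ u0).

Lemma card_matched : #|M| = S.
Proof. by apply/eqP; rewrite -eqSS -card_N0 (cardsD1 u0 N0) u0N. Qed.

Lemma matching_one_unmatched_in_target (g : {ffun 'I_#|M| -> 'I_S}) :
  injective g -> matching B0 g \in target.
Proof.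
move=> g_inj; have paired_but_u0 y : y != inl u0 -> is_paired (matching B0 g) y.
  case: y => [i|w] iu; last first.
    have /codomP[k ->] : w \in codom g.
      by apply: (inj_card_onto g_inj); rewrite !card_ord card_matched.
    exact: matching_paired_image.
  case: (boolP (inl i \in cover B0)) => [/matching_paired_cover//|nc].
  by apply: matching_paired_in; rewrite !inE nc andbT; apply: contra iu => /eqP->.
apply: matching_in_target; last exact: paired_but_u0.
apply: matching_valid => //; first exact: subD1set.
move=> u nu; have /eqP[->] : inl u == inl u0 :> device I S.
  by apply: contraR nu => /paired_but_u0 ->.
split=> // p; have [_ _ _ last0] := vW0; have [_ earlier0] := last0 u0 (ltn_ord u0) nu0.
case/setUP => [/bb_pairings_in/earlier0 //|/imsetP[k _ ->]].
have := enum_valP k; rewrite in_setD1 => /andP[ku kN].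
by exists (enum_val k); rewrite ?set21 ?(unpaired_infected_max vW0 nu0).
Qed.

Lemma target_one_unmatchedE W : W \in target ->
  exists2 g : {ffun 'I_#|M| -> 'I_S}, injective g & W = matching B0 g.
Proof.
case/targetP => vW bbW _.
have [|u uN nu] := exists_unpaired_uncovered vW t; first by rewrite bbW card_N0.
rewrite bbW in uN; have Eu : u = u0.
  apply/eqP; apply: contraT => uu0.
  have lt_uu0 := unpaired_infected_max vW0 nu0 uN uu0.
  have := unpaired_infected_max vW nu; rewrite bbW => /(_ u0 u0N).
  by rewrite eq_sym uu0 => /(_ isT); rewrite ltnNge ltnW.
subst u; have [_ _ _ last] := vW; have [all_paired _] := last u0 (ltn_ord u0) nu.
have EM : M = [set i in uncovered (bb_pairings W) | is_paired W (inl i)].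
  apply/setP => i; rewrite in_setD1 inE bbW.
  case: (eqVneq i u0) => [->|iu]; first by rewrite (negbTE nu) andbF.
  by apply/esym/andb_idr => _; apply: all_paired; apply: contra iu => /eqP[->].
have [EW g_inj _] := matchingE vW t EM.
by exists [ffun k => clean_partner W t (enum_val k)]; last by rewrite {1}EW bbW.
Qed.

End OneUnmatched.

Lemma card_target_one_unmatched : #|N0| = S.+1 -> #|target| = S`!.
Proof.
move=> card_N0.
have [|u0 u0N nu0] := exists_unpaired_uncovered vW0 t; first by rewrite card_N0.
have -> : S`! = #|[set g : {ffun 'I_#|N0 :\ u0| -> 'I_S} | injectiveb g]|.
  by rewrite card_inj_ffuns !card_ord (card_matched u0N card_N0) ffactnn.
apply: card_target_matching => [g|W /(target_one_unmatchedE u0N nu0 card_N0)[g]].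
  by rewrite inE => /injectiveP; apply: matching_one_unmatched_in_target.
by exists g; rewrite // inE; apply/injectiveP.
Qed.

End Counting.

End Wirings.

Unset Implicit Arguments.

Theorem lemma5 (I S j : nat) (hS : 1 <= S)
  (hj : Lbound I S <= j <= I./2) (t : 'I_S)
  (B : {set {set device I S}}) (hB : #|B| = j)
  (hBposs : exists W0 : wiring I S, possible W0 /\ bb_pairings W0 = B) :
  #|[set W : wiring I S | [&& possible W, bb_pairings W == B
                              & is_paired W (inr t)]]| =
  (if dagger I S j then S`!
   else if I - j.*2 == 0 then 0   (* convention 'C(A, B) = 0 for B < 0 *)
   else (I - j.*2)`! * 'C(S - 1, I - j.*2 - 1)).
Proof.
case: hBposs => W0 [/possibleP vW0 bbW0]; subst B.
have card_N0 := card_uncovered vW0; rewrite hB in card_N0.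
have := Lbound_dagger (andP hj).1 (andP hj).2; rewrite -card_N0.
case: dagger => [card_S|le_S]; first exact: card_target_one_unmatched.
rewrite [LHS](card_target_all_matched t vW0 le_S) card_inj_ffuns_hitting !card_ord.
by rewrite ffact_sub_pred // !subn1.
Qed.
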